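(* Let $n\ge 2$ be even and let $\Phi\subset\mathbb{R}^3$ be a root system of type $I_2(n)$ (the $2n$ unit vectors at angles $k\pi/n$, $k=0,\dots,2n-1$, in a 2-dimensional subspace of $\mathbb{R}^3$). Let $P$ be the group generated under the geometric product by $\Phi\cup\{e_1e_2e_3\}$ and let $G=P\cap \mathrm{Cl}^+(3)$ be its even part. Then $G$, regarded as a set of vectors in the 4-dimensional Euclidean space $(\mathrm{Cl}^+(3),(\cdot,\cdot))$, is a root system of type $I_2(n)\oplus I_2(n)$.
   Context: $\mathrm{Cl}(3)$ is the real Clifford algebra of Euclidean $\mathbb{R}^3=\mathrm{span}\{e_1,e_2,e_3\}$ with orthonormal basis $e_1,e_2,e_3$ ($e_i^2=1$, $e_ie_j=-e_je_i$ for $i\neq j$); vectors of $\mathbb{R}^3$ are elements of $\mathrm{Cl}(3)$ and $e_1e_2e_3$ is the pseudoscalar (inversion). The even subalgebra $\mathrm{Cl}^+(3)$ is spanned by $1,e_2e_3,e_3e_1,e_1e_2$. Reversal $\tilde{\ }$ reverses the order of vector factors. The spinor inner product $(R_1,R_2)=\tfrac12(R_1\tilde R_2+R_2\tilde R_1)$ makes $\mathrm{Cl}^+(3)$ a 4D Euclidean space with orthonormal basis $1,e_2e_3,e_3e_1,e_1e_2$. A root system is a finite set $\Phi$ of nonzero vectors in a Euclidean space, spanning its linear span, with $\Phi\cap\mathbb{R}\alpha=\{\pm\alpha\}$ and $s_\alpha(\Phi)=\Phi$ for all $\alpha\in\Phi$, where $s_\alpha(x)=x-2\frac{(x,\alpha)}{(\alpha,\alpha)}\alpha$.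 $I_2(n)$ denotes the rank-2 root system of the dihedral group of order $2n$; $I_2(n)\oplus I_2(n)$ is the orthogonal union of two copies of it in mutually orthogonal planes. *)

From HB Require Import structures.
From mathcomp Require Import all_boot all_order all_algebra.
From mathcomp Require Import reals trigo.
Set Implicit Arguments. Unset Strict Implicit. Unset Printing Implicit Defensive.
Import Order.TTheory GRing.Theory Num.Theory.
Local Open Scope ring_scope.

(* A basis blade is indexed by (a1,a2,a3) : bool*bool*bool and stands for
   e1^a1 e2^a2 e3^a3 (in this order). *)
Definition blade := (bool * bool * bool)%type.
Notation cl3 R := ({ffun blade -> (R : realType)^o}) (only parsing).

Definition bxor (a b : blade) : blade :=
  (addb a.1.1 b.1.1, addb a.1.2 b.1.2, addb a.2 b.2).

(* sign with e1^a1 e2^a2 e3^a3 * e1^b1 e2^b2 e3^b3 = sgn * blade (bxor a b),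
   using e_i^2 = 1 and e_i e_j = - e_j e_i for i <> j *)
Definition bsgn (R : realType) (a b : blade) : R :=
  (-1) ^+ (b.1.1 * (a.1.2 + a.2) + b.1.2 * a.2)%N.

Definition grade (a : blade) : nat := (a.1.1 + a.1.2 + a.2)%N.

Definition gp (R : realType) (x y : cl3 R) : cl3 R :=
  [ffun c => \sum_(a : blade) \sum_(b : blade)
     (if bxor a b == c then bsgn R a b * x a * y b else 0)].

Definition rev (R : realType) (x : cl3 R) : cl3 R :=
  [ffun a => (-1) ^+ 'C(grade a, 2) * x a].

Definition blade_elt (R : realType) (c : blade) : cl3 R :=
  [ffun a => if a == c then 1 else 0].

Definition cl1 (R : realType) : cl3 R := blade_elt R (false, false, false).
Definition e123 (R : realType) : cl3 R := blade_elt R (true, true, true).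

Definition scal (R : realType) (x : cl3 R) : R := x (false, false, false).

Definition vec (R : realType) (w : 'rV[R]_3) : cl3 R :=
  w ord0 0 *: blade_elt R (true, false, false)
  + w ord0 1 *: blade_elt R (false, true, false)
  + w ord0 2 *: blade_elt R (false, false, true).

Definition dot (R : realType) (u v : 'rV[R]_3) : R := \sum_i u ord0 i * v ord0 i.

Definition even_elt (R : realType) (x : cl3 R) : Prop :=
  forall a : blade, odd (grade a) -> x a = 0.

Definition spinor_ip (R : realType) (x y : cl3 R) : R :=
  (scal (gp x (rev y)) + scal (gp y (rev x))) / 2.

Definition gen_or_inv (R : realType) (S : cl3 R -> Prop) (s : cl3 R) : Prop :=
  S s \/ exists t, S t /\ gp t s = cl1 R /\ gp s t = cl1 R.

Inductive gen_group (R : realType) (S : cl3 R -> Prop) : cl3 R -> Prop :=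
  | gen_group_one : gen_group S (cl1 R)
  | gen_group_mul : forall s x, gen_or_inv S s -> gen_group S x ->
                      gen_group S (gp s x).

Definition reflect_in (R : realType) (V : lmodType R) (ip : V -> V -> R)
  (a x : V) : V := x - (2 * ip x a / ip a a) *: a.

(* A root system: a finite set of nonzero vectors with
   Phi /\ R a = {a, -a} and s_a(Phi) = Phi for all a in Phi.
   ("spanning its linear span" is automatic.) *)
Definition is_root_system (R : realType) (V : lmodType R) (ip : V -> V -> R)
  (Phi : V -> Prop) : Prop :=
  [/\ (exists s : seq V, forall x, Phi x <-> x \in s),
      (forall a, Phi a -> a != 0),
      (forall a, Phi a -> forall c : R, Phi (c *: a) <-> (c = 1 \/ c = -1))
    & (forall a x, Phi a -> Phi x -> Phi (reflect_in ip a x))].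

Definition dihedral_roots (R : realType) (V : lmodType R) (n : nat) (a b : V)
  (x : V) : Prop :=
  exists2 k : nat, (k < 2 * n)%N &
    x = cos (k%:R * pi / n%:R) *: a + sin (k%:R * pi / n%:R) *: b.

Definition type_I2_sum_I2 (R : realType) (V : lmodType R) (ip : V -> V -> R)
  (n : nat) (Phi : V -> Prop) : Prop :=
  exists a1 b1 a2 b2 : V,
    [/\ [/\ ip a1 a1 = 1, ip b1 b1 = 1, ip a2 a2 = 1 & ip b2 b2 = 1],
        [/\ ip a1 b1 = 0, ip a1 a2 = 0 & ip a1 b2 = 0],
        [/\ ip b1 a2 = 0, ip b1 b2 = 0 & ip a2 b2 = 0]
      & (forall x, Phi x <-> (dihedral_roots n a1 b1 x \/ dihedral_roots n a2 b2 x))].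

Definition I2_in_R3 (R : realType) (n : nat) (u v : 'rV[R]_3) (x : cl3 R) : Prop :=
  exists2 k : nat, (k < 2 * n)%N &
    x = vec (cos (k%:R * pi / n%:R) *: u + sin (k%:R * pi / n%:R) *: v).

From HB Require Import structures.
From mathcomp Require Import all_boot all_order all_algebra.
From mathcomp Require Import reals trigo.
From mathcomp Require Import ring zify.
Set Implicit Arguments. Unset Strict Implicit. Unset Printing Implicit Defensive.
Import Order.TTheory GRing.Theory Num.Theory.
Local Open Scope ring_scope.

(* Write B = uv and I = e1e2e3.  Since u, v anticommute and square to 1 and I
   is central with I^2 = -1, multiplying by a generator c u + s v or by I
   permutes the four families c + s B,  c u + s v,  I (c + s B),  I (c u + s v),
   where (c, s) = (cos (k pi / n), sin (k pi / n)) runs over a group of 2n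
   points of the unit circle; each family is closed under negation, which
   covers the inverse -I of I.  So P lies in their union, and its even part G
   is the union of the first and last families, which visibly belong to P.  In
   the spinor metric 1, B, I u, I v are orthonormal, so G is the union of two
   I_2(n) systems in orthogonal planes; such a union is a root system because
   a reflection in one plane fixes the other plane pointwise. *)

Section Cl3Coordinates.
Variable R : realType.
Implicit Types (x y : cl3 R) (k : R) (p q : 'rV[R]_3).

Lemma sum_bladeE (F : blade -> R^o) : \sum_(a : blade) F a =
  F (false,false,false) + F (false,false,true) + F (false,true,false) + F (false,true,true)
  + F (true,false,false) + F (true,false,true) + F (true,true,false) + F (true,true,true).
Proof.
have sum_pairE (T : finType) (G : T * bool -> R^o) :
    \sum_a G a = \sum_t (G (t, true) + G (t, false)).
  rewrite -(eq_bigr _ (fun t _ => big_bool _ (fun b => G (t, b)))) pair_bigA.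
  by apply: eq_bigr => -[].
by rewrite !sum_pairE big_bool /=; ring.
Qed.

Lemma gpE x y c :
  gp x y c = \sum_(a : blade) bsgn R a (bxor a c) * x a * y (bxor a c).
Proof.
rewrite ffunE; apply: eq_bigr => a _; rewrite (bigD1 (bxor a c)) //= big1 ?addr0.
  by case: a c => [[? ?] ?] [[? ?] ?]; rewrite /bxor /= !addKb eqxx.
by move=> b; case: a b c => [[[] []] []] [[[] []] []] [[[] []] []].
Qed.

Lemma cl3D x y a : (x + y) a = x a + y a. Proof. by rewrite ffunE. Qed.
Lemma cl3N x a : (- x) a = - x a. Proof. by rewrite ffunE. Qed.
Lemma cl3Z k x a : (k *: x) a = k * x a. Proof. by rewrite ffunE. Qed.
Lemma blade_eltE c a : blade_elt R c a = if a == c then 1 else 0.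
Proof. by rewrite ffunE. Qed.

Lemma vecE p a : vec p a =
  match a with
  | (true, false, false) => p ord0 0
  | (false, true, false) => p ord0 1
  | (false, false, true) => p ord0 2
  | _ => 0
  end.
Proof.
by rewrite /vec !cl3D !cl3Z !blade_eltE; case: a => [[[] []] []] /=; ring.
Qed.

Lemma dotE p q :
  dot p q = p ord0 0 * q ord0 0 + p ord0 1 * q ord0 1 + p ord0 2 * q ord0 2.
Proof.
rewrite /dot !big_ord_recl big_ord0 addr0 addrA.
by congr (_ * _ + _ * _ + _ * _); congr (_ _ _); apply/val_inj.
Qed.

Lemma spinor_ipE x y : spinor_ip x y = \sum_(a : blade) x a * y a.
Proof.
rewrite /spinor_ip /scal !gpE !sum_bladeE /rev !ffunE /bsgn /bxor /=.
by field.
Qed.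
End Cl3Coordinates.

Ltac cl3_expand := rewrite ?dotE ?(cl3D, cl3N, cl3Z) ?(gpE, sum_bladeE)
  ?(vecE, blade_eltE, cl3D, cl3N, cl3Z) /bsgn /bxor /=.
Ltac cl3_coords := apply/ffunP => -[[[] []] []]; cl3_expand.

Section Cl3Algebra.
Variable R : realType.
Implicit Types (x y z : cl3 R) (k : R) (p q : 'rV[R]_3).
Local Notation I := (e123 R).

Lemma gpA x y z : gp (gp x y) z = gp x (gp y z).
Proof. by cl3_coords; ring. Qed.
Lemma gpDl x y z : gp (x + y) z = gp x z + gp y z.
Proof. by cl3_coords; ring. Qed.
Lemma gpDr x y z : gp x (y + z) = gp x y + gp x z.
Proof. by cl3_coords; ring. Qed.
Lemma gpZl k x y : gp (k *: x) y = k *: gp x y.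
Proof. by cl3_coords; ring. Qed.
Lemma gpZr k x y : gp x (k *: y) = k *: gp x y.
Proof. by cl3_coords; ring. Qed.
Lemma gp1x x : gp (cl1 R) x = x.
Proof. by cl3_coords; ring. Qed.
Lemma gpx1 x : gp x (cl1 R) = x.
Proof. by cl3_coords; ring. Qed.

Lemma gpNl x y : gp (- x) y = - gp x y.
Proof. by rewrite -scaleN1r gpZl scaleN1r. Qed.
Lemma gpNr x y : gp x (- y) = - gp x y.
Proof. by rewrite -scaleN1r gpZr scaleN1r. Qed.
Lemma gp0x x : gp 0 x = 0.
Proof. by rewrite -(scale0r (0 : cl3 R)) gpZl !scale0r. Qed.
Lemma gpx0 x : gp x 0 = 0.
Proof. by rewrite -(scale0r (0 : cl3 R)) gpZr !scale0r. Qed.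

Lemma cl1_neq0 : cl1 R != 0.
Proof.
apply/eqP => /ffunP/(_ (false, false, false)).
by rewrite blade_eltE ffunE; apply/eqP/oner_neq0.
Qed.

Lemma gp_unit_neq0 x y : gp x y = cl1 R -> x != 0.
Proof. by move=> xy; apply: contra_eq_neq xy => ->; rewrite gp0x eq_sym cl1_neq0. Qed.

Lemma gp_inv_uniq x y z : gp x y = cl1 R -> gp y z = cl1 R -> x = z.
Proof. by move=> xy yz; rewrite -[x]gpx1 -yz -gpA xy gp1x. Qed.

Lemma gp_e123C x : gp I x = gp x I.
Proof. by cl3_coords; ring. Qed.
Lemma gpCA_e123 x y : gp x (gp I y) = gp I (gp x y).
Proof. by rewrite -gpA -gp_e123C gpA. Qed.
Lemma gp_e123e123 : gp I I = - cl1 R.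
Proof. by cl3_coords; ring. Qed.

Lemma vecD a b p q : vec (a *: p + b *: q) = a *: vec p + b *: vec q.
Proof. by cl3_coords; rewrite !mxE; ring. Qed.
Local Notation e23 := (blade_elt R (false, true, true)).
Local Notation e13 := (blade_elt R (true, false, true)).
Local Notation e12 := (blade_elt R (true, true, false)).

Lemma vec_mulE p q : gp (vec p) (vec q) = dot p q *: cl1 R
  + (p ord0 1 * q ord0 2 - p ord0 2 * q ord0 1) *: e23
  + (p ord0 0 * q ord0 2 - p ord0 2 * q ord0 0) *: e13
  + (p ord0 0 * q ord0 1 - p ord0 1 * q ord0 0) *: e12.
Proof. by cl3_coords; ring. Qed.
Lemma e123_vecE p : gp I (vec p) = p ord0 0 *: e23 - p ord0 1 *: e13 + p ord0 2 *: e12.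
Proof. by cl3_coords; ring. Qed.

Lemma vec_sq p : gp (vec p) (vec p) = dot p p *: cl1 R.
Proof. by rewrite vec_mulE; cl3_coords; ring. Qed.
Lemma vec_anticomm p q :
  gp (vec p) (vec q) + gp (vec q) (vec p) = (2 * dot p q) *: cl1 R.
Proof. by rewrite !vec_mulE; cl3_coords; ring. Qed.

Definition odd_elt x := forall a : blade, ~~ odd (grade a) -> x a = 0.

Lemma even_elt_zeros x : even_elt x ->
  [/\ x (true,false,false) = 0, x (false,true,false) = 0,
      x (false,false,true) = 0 & x (true,true,true) = 0].
Proof. by move=> x_even; split; apply: x_even. Qed.
Lemma odd_elt_zeros x : odd_elt x ->
  [/\ x (false,false,false) = 0, x (true,true,false) = 0,
      x (true,false,true) = 0 & x (false,true,true) = 0].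
Proof. by move=> x_odd; split; apply: x_odd. Qed.

Lemma gp_odd_odd x y : odd_elt x -> odd_elt y -> even_elt (gp x y).
Proof.
move=> /odd_elt_zeros[x0 x1 x2 x3] /odd_elt_zeros[y0 y1 y2 y3] [[[] []] []] //= _;
  by cl3_expand; rewrite x0 x1 x2 x3 y0 y1 y2 y3; ring.
Qed.
Lemma gp_odd_even x y : odd_elt x -> even_elt y -> odd_elt (gp x y).
Proof.
move=> /odd_elt_zeros[x0 x1 x2 x3] /even_elt_zeros[y0 y1 y2 y3] [[[] []] []] //= _;
  by cl3_expand; rewrite x0 x1 x2 x3 y0 y1 y2 y3; ring.
Qed.

Lemma even_elt_comb a b x y :
  even_elt x -> even_elt y -> even_elt (a *: x + b *: y).
Proof.
by move=> x_even y_even c c_odd; rewrite cl3D !cl3Z x_even // y_even // !mulr0 addr0.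
Qed.
Lemma odd_elt_comb a b x y :
  odd_elt x -> odd_elt y -> odd_elt (a *: x + b *: y).
Proof.
by move=> x_odd y_odd c c_even; rewrite cl3D !cl3Z x_odd // y_odd // !mulr0 addr0.
Qed.

Lemma even_cl1 : even_elt (cl1 R).
Proof. by move=> [[[] []] []] //= _; rewrite blade_eltE. Qed.
Lemma odd_e123 : odd_elt I.
Proof. by move=> [[[] []] []] //= _; rewrite blade_eltE. Qed.
Lemma odd_vec p : odd_elt (vec p).
Proof. by move=> [[[] []] []] //= _; rewrite vecE. Qed.

Lemma even_odd_eq0 x : even_elt x -> odd_elt x -> x = 0.
Proof.
move=> x_even x_odd; apply/ffunP => a; rewrite ffunE.
by case: (boolP (odd (grade a))) => [/x_even|/x_odd].
Qed.

Lemma spinor_ipC x y : spinor_ip x y = spinor_ip y x.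
Proof. by rewrite /spinor_ip addrC. Qed.
Lemma spinor_ipDl x y z : spinor_ip (x + y) z = spinor_ip x z + spinor_ip y z.
Proof. by rewrite !spinor_ipE -big_split; apply: eq_bigr => a _; rewrite cl3D mulrDl. Qed.
Lemma spinor_ipZl k x y : spinor_ip (k *: x) y = k * spinor_ip x y.
Proof. by rewrite !spinor_ipE mulr_sumr; apply: eq_bigr => a _; rewrite cl3Z mulrA. Qed.

Ltac spinor_ip_coords :=
  rewrite ?vec_mulE ?e123_vecE spinor_ipE sum_bladeE; cl3_expand; ring.

Lemma spinor_ip11 : spinor_ip (cl1 R) (cl1 R) = 1.
Proof. by spinor_ip_coords. Qed.
Lemma spinor_ip1_vec_mul p q : spinor_ip (cl1 R) (gp (vec p) (vec q)) = dot p q.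
Proof. by spinor_ip_coords. Qed.
Lemma spinor_ip1_e123_vec p : spinor_ip (cl1 R) (gp I (vec p)) = 0.
Proof. by spinor_ip_coords. Qed.
Lemma spinor_ip_vec_mul p q :
  spinor_ip (gp (vec p) (vec q)) (gp (vec p) (vec q)) = dot p p * dot q q.
Proof. by spinor_ip_coords. Qed.
Lemma spinor_ip_e123_vec p q : spinor_ip (gp I (vec p)) (gp I (vec q)) = dot p q.
Proof. by spinor_ip_coords. Qed.
Lemma spinor_ip_vec_mul_e123_vecl p q :
  spinor_ip (gp (vec p) (vec q)) (gp I (vec p)) = 0.
Proof. by spinor_ip_coords. Qed.
Lemma spinor_ip_vec_mul_e123_vecr p q :
  spinor_ip (gp (vec p) (vec q)) (gp I (vec q)) = 0.
Proof. by spinor_ip_coords. Qed.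
End Cl3Algebra.

Section CisRoots.
Variables (R : realType) (n : nat).
Hypothesis n_gt0 : (0 < n)%N.
Implicit Types c s : R.

Local Notation theta k := (k%:R * pi / n%:R : R).

Definition cis_root c s :=
  exists2 k : nat, (k < 2 * n)%N & c = cos (theta k) /\ s = sin (theta k).

Lemma thetaD k l : theta (k + l)%N = theta k + theta l.
Proof. by rewrite natrD !mulrDl. Qed.

Lemma theta_mul2n : theta (2 * n)%N = pi *+ 2.
Proof. by rewrite natrM -mulr_natr; field; rewrite pnatr_eq0 -lt0n. Qed.

Lemma cis_root1 : cis_root 1 0.
Proof. by exists 0%N; rewrite ?muln_gt0 // !mul0r cos0 sin0. Qed.

Lemma cis_rootN1 : cis_root (-1) 0.
Proof.
exists n; first by lia.
have -> : theta n = pi by field; rewrite pnatr_eq0 -lt0n.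
by rewrite cospi sinpi.
Qed.

Lemma cis_root_norm c s : cis_root c s -> c ^+ 2 + s ^+ 2 = 1.
Proof. by case=> k _ [-> ->]; rewrite cos2Dsin2. Qed.

Lemma cis_rootM c1 s1 c2 s2 : cis_root c1 s1 -> cis_root c2 s2 ->
  cis_root (c1 * c2 - s1 * s2) (s1 * c2 + c1 * s2).
Proof.
case=> k k_lt [-> ->] [l l_lt [-> ->]]; rewrite -cosD -sinD -thetaD.
have [kl_lt|kl_ge] := ltnP (k + l) (2 * n); first by exists (k + l)%N.
exists (k + l - 2 * n)%N; first by lia.
have -> : theta (k + l)%N = theta (k + l - 2 * n)%N + pi *+ 2.
  by rewrite -theta_mul2n -thetaD subnK.
by rewrite cosD2pi sinD2pi.
Qed.

Lemma cis_root_conj c s : cis_root c s -> cis_root c (- s).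
Proof.
case=> -[_ [-> ->]|k k_lt [-> ->]].
  by exists 0%N; rewrite ?muln_gt0 // !mul0r sin0 oppr0.
exists (2 * n - k.+1)%N; first by lia.
have -> : theta (2 * n - k.+1)%N = - theta k.+1 + pi *+ 2.
  by rewrite -theta_mul2n -(subnK (ltnW k_lt)) thetaD addnK; ring.
by rewrite cosD2pi sinD2pi cosN sinN.
Qed.

Lemma cis_rootN c s : cis_root c s -> cis_root (- c) (- s).
Proof.
by move=> /cis_rootM/(_ cis_rootN1); rewrite !mulrN1 !mulr0 subr0 addr0.
Qed.
End CisRoots.

Section DihedralRootSystems.
Variables (R : realType) (V : lmodType R) (n : nat).
Hypothesis n_gt0 : (0 < n)%N.
Implicit Types (a b r x y : V) (c s : R).

Lemma dihedral_rootsE a b x :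
  dihedral_roots n a b x <-> exists c s, cis_root n c s /\ x = c *: a + s *: b.
Proof.
split=> [[k k_lt ->]|[c [s [[k k_lt [-> ->]] ->]]]]; last by exists k.
by exists (cos (k%:R * pi / n%:R)), (sin (k%:R * pi / n%:R)); split=> //; exists k.
Qed.

Lemma dihedral_roots_finite a b :
  exists rs : seq V, forall x, dihedral_roots n a b x <-> x \in rs.
Proof.
exists [seq cos (k%:R * pi / n%:R) *: a + sin (k%:R * pi / n%:R) *: b
          | k <- iota 0 (2 * n)] => x.
split=> [[k k_lt ->]|/mapP[k]]; first by apply: map_f; rewrite mem_iota.
by rewrite mem_iota => /andP[_ k_lt] ->; exists k.
Qed.

Lemma dihedral_rootsN a b x : dihedral_roots n a b x -> dihedral_roots n a b (- x).
Proof.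
move=> /dihedral_rootsE[c [s [cs ->]]]; apply/dihedral_rootsE.
exists (- c), (- s); split; first exact: cis_rootN.
by rewrite opprD -!scaleNr.
Qed.

Variable ip : V -> V -> R.
Hypotheses (ipDl : forall x y z, ip (x + y) z = ip x z + ip y z)
  (ipZl : forall k x y, ip (k *: x) y = k * ip x y)
  (ipC : forall x y, ip x y = ip y x).

Lemma ip_comb a b a' b' c s c' s' :
  ip (c *: a + s *: b) (c' *: a' + s' *: b') =
  c * c' * ip a a' + c * s' * ip a b' + s * c' * ip b a' + s * s' * ip b b'.
Proof.
rewrite ipDl !ipZl ![ip _ (_ + _)]ipC !ipDl !ipZl ![ip _ a]ipC ![ip _ b]ipC; ring.
Qed.

Lemma reflect_in_orthogonal r x : ip x r = 0 -> reflect_in ip r x = x.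
Proof. by move=> xr; rewrite /reflect_in xr mulr0 mul0r scale0r subr0. Qed.

Section OrthonormalPlane.
Variables a b : V.
Hypotheses (aa : ip a a = 1) (bb : ip b b = 1) (ab : ip a b = 0).

Lemma dihedral_roots_norm x : dihedral_roots n a b x -> ip x x = 1.
Proof.
move=> /dihedral_rootsE[c [s [cs ->]]].
rewrite ip_comb aa bb (ipC b) ab; transitivity (c ^+ 2 + s ^+ 2); first ring.
exact: cis_root_norm cs.
Qed.

(* In complex notation the reflection along r sends x to - r^2 conj(x). *)
Lemma dihedral_roots_reflect r x :
  dihedral_roots n a b r -> dihedral_roots n a b x ->
  dihedral_roots n a b (reflect_in ip r x).
Proof.
move=> r_root /dihedral_rootsE[c' [s' [cs' ->]]].
rewrite /reflect_in (dihedral_roots_norm r_root) divr1.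
move: r_root => /dihedral_rootsE[c [s [cs ->]]]; apply/dihedral_rootsE.
have := cis_rootN n_gt0
  (cis_rootM n_gt0 (cis_rootM n_gt0 cs cs) (cis_root_conj n_gt0 cs')).
set c'' := - _; set s'' := - _ => cs''; exists c'', s''; split=> //.
rewrite ip_comb aa bb (ipC b) ab scalerDr !scalerA opprD addrACA -!scalerBl.
have norm1 := cis_root_norm cs.
congr (_ *: _ + _ *: _); apply/eqP; rewrite -subr_eq0; apply/eqP.
- transitivity (c' * (1 - (c ^+ 2 + s ^+ 2))); first by rewrite /c''; ring.
  by rewrite norm1 subrr mulr0.
- transitivity (s' * (1 - (c ^+ 2 + s ^+ 2))); first by rewrite /s''; ring.
  by rewrite norm1 subrr mulr0.
Qed.
End OrthonormalPlane.

Lemma type_I2_sum_I2_root_system Phi :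
  type_I2_sum_I2 ip n Phi -> is_root_system ip Phi.
Proof.
case=> a1 [b1 [a2 [b2 [[a1a1 b1b1 a2a2 b2b2] [a1b1 a1a2 a1b2] [b1a2 b1b2 a2b2] PhiE]]]].
have orth x y : dihedral_roots n a1 b1 x -> dihedral_roots n a2 b2 y -> ip x y = 0.
  move=> /dihedral_rootsE[c [s [_ ->]]] /dihedral_rootsE[c' [s' [_ ->]]].
  by rewrite ip_comb a1a2 a1b2 b1a2 b1b2 !mulr0 !addr0.
have Phi_norm x : Phi x -> ip x x = 1.
  by case/PhiE => x_root;
    [exact (dihedral_roots_norm a1a1 b1b1 a1b1 x_root)
    | exact (dihedral_roots_norm a2a2 b2b2 a2b2 x_root)].
split.
- have [rs1 rs1E] := dihedral_roots_finite a1 b1.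
  have [rs2 rs2E] := dihedral_roots_finite a2 b2.
  exists (rs1 ++ rs2) => x; rewrite mem_cat; split.
    by case/PhiE => [/rs1E|/rs2E] ->; rewrite ?orbT.
  by case/orP => [/rs1E|/rs2E] x_root; apply/PhiE; [left|right].
- move=> r /Phi_norm rr; apply: contra_eq_neq rr => ->.
  by rewrite -(scale0r (0 : V)) ipZl mul0r eq_sym oner_neq0.
- move=> r Phi_r k; split=> [/Phi_norm|[]->].
  + rewrite ipZl ipC ipZl (Phi_norm _ Phi_r) mulr1 -expr2 => /eqP.
    by rewrite sqrf_eq1 => /orP[]/eqP; [left|right].
  + by rewrite scale1r.
  + rewrite scaleN1r; apply/PhiE.
    by case/PhiE: Phi_r => r_root; [left|right]; apply: dihedral_rootsN.
- move=> r x /PhiE r_root /PhiE x_root; apply/PhiE.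
  case: r_root x_root => r_root [] x_root.
  + by left; apply: dihedral_roots_reflect.
  + by right; rewrite reflect_in_orthogonal // ipC orth.
  + by left; rewrite reflect_in_orthogonal // orth.
  + by right; apply: dihedral_roots_reflect.
Qed.
End DihedralRootSystems.

Ltac cl3_linear := apply/ffunP => ?; rewrite !(cl3D, cl3N, cl3Z); ring.

Section EvenSubgroup.
Variables (R : realType) (n : nat).
Hypothesis n_gt0 : (0 < n)%N.
Variables (U W : cl3 R) (S : cl3 R -> Prop).
Hypotheses (UU : gp U U = cl1 R) (WW : gp W W = cl1 R) (WU : gp W U = - gp U W).
Hypotheses (U_odd : odd_elt U) (W_odd : odd_elt W).
Hypothesis SE : forall y, S y <-> dihedral_roots n U W y \/ y = e123 R.
Implicit Types (a b c d s : R) (x y : cl3 R).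

Local Notation I := (e123 R).
Local Notation B := (gp U W).

Definition plane_vec c s := c *: U + s *: W.
Definition rotor c s := c *: cl1 R + s *: B.

Lemma gp_U_B : gp U B = W.
Proof. by rewrite -gpA UU gp1x. Qed.
Lemma gp_W_B : gp W B = - U.
Proof. by rewrite -gpA WU gpNl gpA WW gpx1. Qed.

Lemma gp_plane_vec a b c d :
  gp (plane_vec a b) (plane_vec c d) = rotor (a * c + b * d) (a * d - b * c).
Proof. by rewrite /plane_vec /rotor gpDl !gpDr !gpZl !gpZr UU WW WU; cl3_linear. Qed.

Lemma gp_plane_vec_rotor a b c d :
  gp (plane_vec a b) (rotor c d) = plane_vec (a * c - b * d) (b * c + a * d).
Proof.
by rewrite /plane_vec /rotor gpDl !gpDr !gpZl !gpZr !gpx1 gp_U_B gp_W_B; cl3_linear.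
Qed.

Lemma gp_U_plane_vec c s : gp U (plane_vec c s) = rotor c s.
Proof. by rewrite /plane_vec /rotor gpDr !gpZr UU. Qed.

Lemma rotor10 : rotor 1 0 = cl1 R.
Proof. by rewrite /rotor scale1r scale0r addr0. Qed.

Lemma rotorN c s : - rotor c s = rotor (- c) (- s).
Proof. by rewrite /rotor opprD -!scaleNr. Qed.
Lemma plane_vecN c s : - plane_vec c s = plane_vec (- c) (- s).
Proof. by rewrite /plane_vec opprD -!scaleNr. Qed.

Lemma plane_vec_sq c s :
  cis_root n c s -> gp (plane_vec c s) (plane_vec c s) = cl1 R.
Proof.
by move=> /cis_root_norm cs; rewrite gp_plane_vec -!expr2 cs mulrC subrr rotor10.
Qed.

Definition pin_elt x := exists c s, cis_root n c s /\
  [\/ x = rotor c s, x = plane_vec c s, x = gp I (rotor c s) | x = gp I (plane_vec c s)].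

Lemma pin_eltN x : pin_elt x -> pin_elt (- x).
Proof.
case=> c [s [cs x_eq]]; exists (- c), (- s); split; first exact: cis_rootN.
by case: x_eq => ->; rewrite -?gpNr ?rotorN ?plane_vecN; constructor.
Qed.

Lemma pin_elt_e123 x : pin_elt x -> pin_elt (gp I x).
Proof.
case=> c [s [cs x_eq]]; case: x_eq => ->; try by exists c, s; split=> //; constructor.
all: rewrite -gpA gp_e123e123 gpNl gp1x; apply: pin_eltN.
all: by exists c, s; split=> //; constructor.
Qed.

Lemma pin_elt_plane_vec a b x :
  cis_root n a b -> pin_elt x -> pin_elt (gp (plane_vec a b) x).
Proof.
move=> ab [c [s [cs x_eq]]].
have cs_rot := cis_rootM n_gt0 ab cs.
have cs_vec : cis_root n (a * c + b * s) (a * s - b * c).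
  have := cis_rootM n_gt0 (cis_root_conj n_gt0 ab) cs.
  by rewrite mulNr opprK mulNr -[- (b * c) + _]addrC.
case: x_eq => ->; rewrite ?gpCA_e123.
- by rewrite gp_plane_vec_rotor; do 2 eexists; split; [exact: cs_rot | constructor 2].
- by rewrite gp_plane_vec; do 2 eexists; split; [exact: cs_vec | constructor 1].
- by rewrite gp_plane_vec_rotor; do 2 eexists; split; [exact: cs_rot | constructor 4].
- by rewrite gp_plane_vec; do 2 eexists; split; [exact: cs_vec | constructor 3].
Qed.

Lemma gen_group_pin x : gen_group S x -> pin_elt x.
Proof.
elim=> [|g y g_gen _ y_pin].
  by exists 1, 0; split; [exact: cis_root1 | constructor 1; rewrite rotor10].
have vec_pin a b : cis_root n a b -> pin_elt (gp (plane_vec a b) y).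
  by move=> ab; apply: pin_elt_plane_vec.
case: g_gen => [/SE[/dihedral_rootsE[a [b [ab ->]]]|->]|[t [/SE t_gen [gt tg]]]].
- exact: vec_pin.
- exact: pin_elt_e123.
case: t_gen gt tg => [/dihedral_rootsE[a [b [ab ->]]]|->] _ gt.
  by rewrite (gp_inv_uniq gt (plane_vec_sq ab)); apply: vec_pin.
have e123_inv : gp I (- I) = cl1 R by rewrite gpNr gp_e123e123 opprK.
by rewrite (gp_inv_uniq gt e123_inv) gpNl; apply/pin_eltN/pin_elt_e123.
Qed.

Lemma odd_plane_vec c s : odd_elt (plane_vec c s).
Proof. exact: odd_elt_comb. Qed.
Lemma even_rotor c s : even_elt (rotor c s).
Proof. exact/even_elt_comb/gp_odd_odd/W_odd/U_odd/even_cl1. Qed.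

Lemma plane_vec_neq0 c s : cis_root n c s -> plane_vec c s != 0.
Proof. by move=> /plane_vec_sq; apply: gp_unit_neq0. Qed.

Lemma e123_rotor_neq0 c s : cis_root n c s -> gp I (rotor c s) != 0.
Proof.
move=> /plane_vec_neq0; apply: contra_neq => e123_rotor0.
have rotor0 : rotor c s = 0.
  rewrite -[rotor c s]gp1x -[cl1 R]opprK -gp_e123e123 gpNl gpA e123_rotor0.
  by rewrite gpx0 oppr0.
by rewrite -[plane_vec c s]gp1x -UU gpA gp_U_plane_vec rotor0 gpx0.
Qed.

Lemma gen_group_even x : gen_group S x /\ even_elt x <->
  dihedral_roots n (cl1 R) B x \/ dihedral_roots n (gp I U) (gp I W) x.
Proof.
split=> [[/gen_group_pin[c [s [cs x_eq]]] x_even]|].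
  case: x_eq x_even => -> x_even.
  - by left; apply/dihedral_rootsE; exists c, s.
  - by case/eqP: (plane_vec_neq0 cs); apply: even_odd_eq0 (odd_plane_vec c s).
  - case/eqP: (e123_rotor_neq0 cs); apply: even_odd_eq0 x_even _.
    exact/gp_odd_even/even_rotor/odd_e123.
  - by right; apply/dihedral_rootsE; exists c, s; rewrite gpDr !gpZr.
have U_gen : gen_or_inv S U.
  left; apply/SE; left; apply/dihedral_rootsE; exists 1, 0.
  by rewrite scale1r scale0r addr0; split=> //; exact: cis_root1.
have vec_gen c s : cis_root n c s -> gen_group S (gp (plane_vec c s) (cl1 R)).
  move=> cs; apply: gen_group_mul (gen_group_one _).
  by left; apply/SE; left; apply/dihedral_rootsE; exists c, s.
case=> /dihedral_rootsE[c [s [cs ->]]]; split.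
- rewrite -[_ + _]/(rotor c s) -gp_U_plane_vec -[plane_vec c s]gpx1.
  exact: gen_group_mul U_gen (vec_gen c s cs).
- exact: even_rotor.
- rewrite -!gpZr -gpDr -[_ + _]/(plane_vec c s) -[plane_vec c s]gpx1.
  by apply: gen_group_mul _ (vec_gen c s cs); left; apply/SE; right.
- by rewrite -!gpZr -gpDr; apply/gp_odd_odd/odd_plane_vec/odd_e123.
Qed.
End EvenSubgroup.

Lemma I2_in_R3E (R : realType) n (u v : 'rV[R]_3) x :
  I2_in_R3 n u v x <-> dihedral_roots n (vec u) (vec v) x.
Proof. by split=> -[k k_lt ->]; exists k; rewrite ?vecD. Qed.

Theorem mainTheorem3 (R : realType) (n : nat) (u v : 'rV[R]_3) :
  (2 <= n)%N -> ~~ odd n ->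
  dot u u = 1 -> dot v v = 1 -> dot u v = 0 ->
  is_root_system (@spinor_ip R)
    (fun x => gen_group (fun y => I2_in_R3 n u v y \/ y = e123 R) x /\ even_elt x)
  /\ type_I2_sum_I2 (@spinor_ip R) n
    (fun x => gen_group (fun y => I2_in_R3 n u v y \/ y = e123 R) x /\ even_elt x).
Proof.
move=> n_ge2 _ uu vv uv; have n_gt0 : (0 < n)%N by apply: leq_trans n_ge2.
apply: (fun T => conj (type_I2_sum_I2_root_system n_gt0 (@spinor_ipDl R)
  (@spinor_ipZl R) (@spinor_ipC R) T) T).
exists (cl1 R), (gp (vec u) (vec v)), (gp (e123 R) (vec u)), (gp (e123 R) (vec v)).
rewrite spinor_ip11 spinor_ip_vec_mul !spinor_ip_e123_vec spinor_ip1_vec_mul.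
rewrite !spinor_ip1_e123_vec spinor_ip_vec_mul_e123_vecl spinor_ip_vec_mul_e123_vecr.
rewrite uu vv uv mulr1; split=> //.
have uu' : gp (vec u) (vec u) = cl1 R by rewrite vec_sq uu scale1r.
have vv' : gp (vec v) (vec v) = cl1 R by rewrite vec_sq vv scale1r.
have vu : gp (vec v) (vec u) = - gp (vec u) (vec v).
  by apply/eqP; rewrite -addr_eq0 addrC vec_anticomm uv mulr0 scale0r.
have gensE y : I2_in_R3 n u v y \/ y = e123 R <->
    dihedral_roots n (vec u) (vec v) y \/ y = e123 R.
  by split=> -[/I2_in_R3E|]; by [left | right].
exact (gen_group_even n_gt0 uu' vv' vu (odd_vec u) (odd_vec v) gensE).
Qed.
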